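(* Let $n\ge p$, $\nu>0$, $\boldsymbol\eta\in\mathbb R^p$ with $\max_j\eta_j<1$, and fix $d_2,\dots,d_p>0$. Let $g_1(d_1)=\exp(\nu\eta_1d_1)/\left[{}_0F_1\!\left(\tfrac n2,\tfrac{D^2}{4}\right)\right]^\nu$ (with $D=\mathrm{diag}(d_1,d_2,\dots,d_p)$) be the unnormalized conditional density of $d_1$ given $(d_2,\dots,d_p)$ under IMDY$(\nu,\boldsymbol\eta)$, and let $m$ be its mode. Then for every $b>0$, the function $Q(d_1)=g_1(d_1+b)/g_1(d_1)$ is strictly decreasing for $d_1>m$.
   Context: $\mathcal V_{n,p}=\{X\in\mathbb R^{n\times p}:X^TX=I_p\}$ with normalized Haar probability measure $[dX]$; ${}_0F_1\!\left(\tfrac n2,\tfrac{D^2}{4}\right)=\int_{\mathcal V_{n,p}}\exp\big(\sum_j d_jX_{jj}\big)[dX]$. IMDY$(\nu,\boldsymbol\eta)$ is the distribution on $\mathbb R_+^p$ with Lebesgue density proportional to $\exp(\nu\boldsymbol\eta^T\boldsymbol d)/[{}_0F_1(\tfrac n2,\tfrac{D^2}4)]^\nu$. *)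

From HB Require Import structures.
From mathcomp Require Import all_boot all_order all_algebra.
From mathcomp Require Import all_classical all_reals all_analysis.
Set Implicit Arguments. Unset Strict Implicit. Unset Printing Implicit Defensive.
Import Order.TTheory GRing.Theory Num.Theory.
Local Open Scope classical_set_scope.
Local Open Scope ring_scope.

(* Real n x p matrices, as a measurable space whose sigma-algebra is the one
   generated by the n*p coordinate maps (= Borel sigma-algebra of R^{n x p}). *)
Definition rmat (R : realType) (n p : nat) : Type := 'M[R]_(n, p).

HB.instance Definition _ (R : realType) n p := Choice.on (rmat R n p).
HB.instance Definition _ (R : realType) n p :=
  isPointed.Build (rmat R n p) (0 : 'M[R]_(n, p)).

Section rmat_measurable.
Context (R : realType) (n p : nat).

Definition rmat_measurable : set (set (rmat R n p)) :=
  <<s \bigcup_(ij in [set: 'I_n * 'I_p])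
        preimage_set_system setT (fun X : rmat R n p => X ij.1 ij.2)
          (@measurable _ R) >>.

Let rmat_set0 : rmat_measurable set0.
Proof. exact: (@sigma_algebra0 _ setT). Qed.
Let rmat_setC A : rmat_measurable A ->
  rmat_measurable (~` A).
Proof. move=> hA; rewrite -setTD; exact: (sigma_algebraCD hA). Qed.
Let rmat_bigcup (F : _^nat) : (forall i, rmat_measurable (F i)) ->
  rmat_measurable (\bigcup_i (F i)).
Proof. exact: sigma_algebra_bigcup. Qed.

HB.instance Definition _ := @isMeasurable.Build default_measure_display
  (rmat R n p) (rmat_measurable) rmat_set0 rmat_setC rmat_bigcup.
End rmat_measurable.

Section IMDY.
Context (R : realType).

Definition stiefel (n p : nat) : set (rmat R n p) :=
  [set X | X^T *m X = 1%:M].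

(* mu is the normalized Haar (uniform) probability measure [dX] on V_{n,p}:
   a probability measure carried by V_{n,p} and invariant under the left
   action X |-> Q X of the orthogonal group O(n).  (For p <= n such a measure
   exists and is unique.) *)
Definition stiefel_haar (n p : nat) (mu : probability (rmat R n p) R) : Prop :=
  mu.-negligible (~` @stiefel n p) /\
  forall Q : 'M[R]_n, Q^T *m Q = 1%:M ->
    forall A : set (rmat R n p), measurable A ->
      mu ((fun X : rmat R n p => (Q *m X : rmat R n p)) @^-1` A) = mu A.

(* 0F1(n/2, D^2/4) = \int_{V_{n,p}} exp(sum_j d_j X_jj) [dX], D = diag(d). *)
Definition hyp0F1 (n p : nat) (mu : probability (rmat R n p) R)
    (d : 'I_p -> R) : R :=
  Rintegral mu setT
    (fun X : rmat R n p =>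
       expR (\sum_(i < n) \sum_(j < p | (i == j :> nat)) d j * X i j)).

(* diag(d_1, d_2, ..., d_p) with d_1 := x and (d_2, ..., d_p) := dr 1, ..., dr q *)
Definition dvec (q : nat) (x : R) (dr : 'I_q.+1 -> R) : 'I_q.+1 -> R :=
  fun j => if j == ord0 then x else dr j.

Definition g1 (n q : nat) (mu : probability (rmat R n q.+1) R) (nu : R)
    (eta : 'I_q.+1 -> R) (dr : 'I_q.+1 -> R) (x : R) : R :=
  expR (nu * eta ord0 * x) / (hyp0F1 mu (dvec x dr)) `^ nu.

Definition is_mode (f : R -> R) (m : R) : Prop :=
  0 <= m /\ forall x, 0 <= x -> f x <= f m.

End IMDY.

From mathcomp Require Import all_boot all_order all_algebra fingroup perm.
From mathcomp Require Import all_classical all_reals all_analysis.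
From mathcomp Require Import measurable_realfun ring lra.
Import Order.TTheory GRing.Theory Num.Theory.
Set Implicit Arguments. Unset Strict Implicit. Unset Printing Implicit Defensive.
Local Open Scope classical_set_scope.
Local Open Scope ring_scope.

(* With u(X) = X_11 and w(X) = sum_{j >= 2} d_j X_jj we have
   0F1(n/2, D^2/4) = F(d_1) := \int exp(d_1 u + w) [dX], hence
   Q(d_1) = exp(nu eta_1 b) (F(d_1) / F(d_1 + b))^nu, and Q decreases as soon as
   F(x + b) F(y) < F(x) F(y + b) for x < y, i.e. log F is strictly convex.  This
   holds for every d_1.
   Symmetrizing, 2 (F(x) F(y + b) - F(x + b) F(y)) is the double integral of
   e^{w(z) + w(v)} (e^{x u(z) + y u(v)} - e^{y u(z) + x u(v)}) (e^{b u(v)} - e^{b u(z)}),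
   which is nonnegative and positive where u(z) < u(v).  Strictness thus needs
   u to take both signs with positive probability, which follows from the
   invariance of [dX] under X |-> -X and under row permutations, since the
   first column of a point of V_{n,p} is a unit vector. *)

Section integral_lemmas.
Context d (T : measurableType d) (R : realType).

Lemma bounded_integrable (mu : probability T R) (D : set T) (f : T -> R) (M : R) :
  measurable D -> measurable_fun D f -> (forall z, D z -> `|f z| <= M) ->
  mu.-integrable D (EFin \o f).
Proof.
move=> mD mf bf; apply: measurable_bounded_integrable => //.
  by rewrite (le_lt_trans (probability_le1 mu mD)) ?ltry.
rewrite /bounded_near; near=> K => z Dz /=.
apply: le_trans (bf z Dz) _.
by near: K; apply: nbhs_pinfty_ge; rewrite num_real.
Unshelve. all: end_near. Qed.

Lemma Rintegral_gt0 (mu : {measure set T -> \bar R}) (D A : set T) (f : T -> R) :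
  measurable D -> measurable A -> A `<=` D -> measurable_fun D f ->
  (forall z, D z -> 0 <= f z) -> (forall z, A z -> 0 < f z) ->
  (0 < mu A)%E -> mu.-integrable D (EFin \o f) ->
  0 < \int[mu]_(z in D) f z.
Proof.
move=> mD mA AD mf f0 fA muA intf.
have mfA : measurable_fun A (fun z => (f z)%:E).
  by apply/measurable_EFinP; exact: measurable_funS mf.
have intA_gt0 : (0 < \int[mu]_(z in A) (f z)%:E)%E.
  rewrite lt0e integral_ge0 ?andbT; last by move=> z Az; rewrite lee_fin ltW// fA.
  apply/negP => /eqP intA0.
  have : (\int[mu]_(z in A) `|(EFin \o f) z| = 0)%E.
    rewrite -intA0; apply: eq_integral => z /[!inE] Az /=.
    by rewrite ger0_norm// ltW// fA.
  move/(ae_eq_integral_abs mu mA mfA) => [N [mN N0 sN]].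
  suff : (mu A <= mu N)%E by rewrite N0 leNgt muA.
  apply: le_measure; rewrite ?inE// => z Az.
  by apply: sN => /= /(_ Az) [] /eqP; rewrite gt_eqF // fA.
have intD_gt0 : (0 < \int[mu]_(z in D) (f z)%:E)%E.
  apply: lt_le_trans intA_gt0 _; apply: ge0_subset_integral => //.
  exact/measurable_EFinP.
by rewrite /Rintegral fine_gt0// intD_gt0 ltey_eq (integrable_fin_num mD intf).
Qed.

Lemma Rintegral_setC_null (mu : {measure set T -> \bar R}) (N : set T) (f : T -> R) :
  measurable N -> mu N = 0%E -> measurable_fun setT f -> (forall z, 0 <= f z) ->
  \int[mu]_(z in setT) f z = \int[mu]_(z in ~` N) f z.
Proof.
move=> mN N0 mf f0; congr fine.
have mfe : measurable_fun setT (fun z => (f z)%:E) by exact/measurable_EFinP.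
rewrite -(setvU N) ge0_integral_setU //; last 4 first.
- exact: measurableC.
- by rewrite setvU.
- by move=> z _; rewrite lee_fin.
- by rewrite /disj_set setICl eqxx.
by rewrite (null_set_integral mN _ N0) ?adde0 //; exact: measurable_funS mfe.
Qed.

Lemma measure_setCI_null (mu : {measure set T -> \bar R}) (N S : set T) :
  measurable N -> mu N = 0%E -> measurable S -> mu (~` N `&` S) = mu S.
Proof.
move=> mN N0 mS; rewrite (measureDI mu mS mN) setDE [~` N `&` S]setIC.
rewrite [X in _ = (_ + X)%E](_ : _ = 0%E) ?adde0 //.
apply/eqP; rewrite eq_le measure_ge0 andbT -N0.
by apply: le_measure; rewrite ?inE//; exact: measurableI.
Qed.

Section combination4.
Variables (mu : {measure set T -> \bar R}) (D : set T) (f1 f2 f3 f4 : T -> R).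
Variables (a1 a2 a3 a4 : R).
Hypothesis mD : measurable D.
Hypotheses (i1 : mu.-integrable D (EFin \o f1)) (i2 : mu.-integrable D (EFin \o f2)).
Hypotheses (i3 : mu.-integrable D (EFin \o f3)) (i4 : mu.-integrable D (EFin \o f4)).

Let integrableZ (f : T -> R) (a : R) : mu.-integrable D (EFin \o f) ->
  mu.-integrable D (EFin \o (fun z => a * f z)).
Proof. by move=> hf; apply: eq_integrable (integrableZl mD a hf). Qed.

Let integrableD (f g : T -> R) :
  mu.-integrable D (EFin \o f) -> mu.-integrable D (EFin \o g) ->
  mu.-integrable D (EFin \o (fun z => f z + g z)).
Proof. by move=> hf hg; apply: eq_integrable (integrableD mD hf hg). Qed.

Lemma integrable_comb4 : mu.-integrable D
  (EFin \o (fun z => a1 * f1 z + a2 * f2 z - (a3 * f3 z + a4 * f4 z))).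
Proof.
by apply: eq_integrable (integrableB mD (integrableD (integrableZ a1 i1) (integrableZ a2 i2))
  (integrableD (integrableZ a3 i3) (integrableZ a4 i4))).
Qed.

Lemma Rintegral_comb4 :
  \int[mu]_(z in D) (a1 * f1 z + a2 * f2 z - (a3 * f3 z + a4 * f4 z)) =
  a1 * \int[mu]_(z in D) f1 z + a2 * \int[mu]_(z in D) f2 z
   - (a3 * \int[mu]_(z in D) f3 z + a4 * \int[mu]_(z in D) f4 z).
Proof.
rewrite RintegralB ?RintegralD ?RintegralZl //;
  by [apply: integrableZ | apply: integrableD; apply: integrableZ].
Qed.

End combination4.
End integral_lemmas.

Definition cross_gap (R : realType) (x y b U V W1 W2 : R) :=
  expR (x * U + W1) * expR ((y + b) * V + W2) + expR ((y + b) * U + W1) * expR (x * V + W2)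
  - (expR ((x + b) * U + W1) * expR (y * V + W2) + expR (y * U + W1) * expR ((x + b) * V + W2)).

Section cross_gap.
Variables (R : realType) (x y b : R).
Hypotheses (xy : x < y) (b_gt0 : 0 < b).

Lemma cross_gapE U V W1 W2 : cross_gap x y b U V W1 W2 = expR W1 * expR W2 *
  ((expR (x * U + y * V) - expR (y * U + x * V)) * (expR (b * V) - expR (b * U))).
Proof. by rewrite /cross_gap !expRD !mulrDl !expRD; ring. Qed.

Lemma cross_gap_gt0 U V W1 W2 : U < V -> 0 < cross_gap x y b U V W1 W2.
Proof.
move=> UV; rewrite cross_gapE; apply: mulr_gt0; first by rewrite mulr_gt0 ?expR_gt0.
apply: mulr_gt0; rewrite subr_gt0 ltr_expR ?ltr_pM2l// -subr_gt0.
have -> : x * U + y * V - (y * U + x * V) = (y - x) * (V - U) by ring.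
by rewrite mulr_gt0 ?subr_gt0.
Qed.

Lemma cross_gap_ge0 U V W1 W2 : 0 <= cross_gap x y b U V W1 W2.
Proof.
have cross_gapC : cross_gap x y b U V W1 W2 = cross_gap x y b V U W2 W1.
  by rewrite /cross_gap; ring.
have [UV|VU|->] := ltgtP U V; first exact/ltW/cross_gap_gt0.
  by rewrite cross_gapC; exact/ltW/cross_gap_gt0.
by rewrite cross_gapE [y * V + _]addrC subrr mul0r mulr0.
Qed.

End cross_gap.

Section mgf.
Context d (T : measurableType d) (R : realType) (mu : probability T R).
Variables (D : set T) (u w : T -> R) (Mu Mw c : R).
Hypotheses (mD : measurable D) (mu_ : measurable_fun D u) (mw : measurable_fun D w).
Hypotheses (bu : forall z, D z -> `|u z| <= Mu) (bw : forall z, D z -> `|w z| <= Mw).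
Hypotheses (u_lt : (0 < mu (D `&` [set z | (u z < c)%R]))%E)
           (u_gt : (0 < mu (D `&` [set z | (c < u z)%R]))%E).

Definition mgf t := \int[mu]_(z in D) expR (t * u z + w z).

Let phi t z := expR (t * u z + w z).

Let measurable_phi t : measurable_fun D (phi t).
Proof.
apply: measurableT_comp => //; apply: measurable_funD => //.
exact: measurable_funM.
Qed.

Let integrable_phi t : mu.-integrable D (EFin \o phi t).
Proof.
apply: (@bounded_integrable _ _ _ _ _ _ (expR (`|t| * Mu + Mw))) => // z Dz.
rewrite ger0_norm ?expR_ge0// ler_expR lerD //.
  by apply: le_trans (ler_norm _) _; rewrite normrM ler_wpM2l// bu.
by apply: le_trans (ler_norm _) _; exact: bw.
Qed.

Let measurable_u_lt : measurable (D `&` [set z | u z < c]).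
Proof. by rewrite -preimage_itvNyo; exact: mu_. Qed.

Let measurable_u_gt : measurable (D `&` [set z | c < u z]).
Proof. by rewrite -preimage_itvoy; exact: mu_. Qed.

Lemma mgf_gt0 t : 0 < mgf t.
Proof.
apply: (Rintegral_gt0 (A := D `&` [set z | u z < c])) => //.
- exact: measurable_phi.
- by move=> z _; exact: expR_gt0.
- exact: integrable_phi.
Qed.

Lemma mgf_strict_logconvex x y b : x < y -> 0 < b ->
  mgf (x + b) * mgf y < mgf x * mgf (y + b).
Proof.
move=> xy b_gt0.
pose H z v := phi x z * phi (y + b) v + phi (y + b) z * phi x v
             - (phi (x + b) z * phi y v + phi y z * phi (x + b) v).
have HE z v : H z v = cross_gap x y b (u z) (u v) (w z) (w v) by [].
have integrable_H z := integrable_comb4 (phi x z) (phi (y + b) z) (phi (x + b) z)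
  (phi y z) mD (integrable_phi (y + b)) (integrable_phi x)
  (integrable_phi y) (integrable_phi (x + b)).
pose G z := mgf (y + b) * phi x z + mgf x * phi (y + b) z
             - (mgf y * phi (x + b) z + mgf (x + b) * phi y z).
have GE z : G z = \int[mu]_(v in D) H z v.
  by rewrite Rintegral_comb4 // /G /mgf /phi; ring.
have measurable_H z : measurable_fun D (H z).
  by apply: measurable_funB; apply: measurable_funD; apply: measurable_funM.
have G_gt0 z : u z < c -> 0 < G z.
  move=> uzc; rewrite GE; apply: (Rintegral_gt0 (A := D `&` [set v | c < u v])) => //.
  - by move=> v _; rewrite HE; exact: cross_gap_ge0.
  - by move=> v [_ /= cuv]; rewrite HE; apply: cross_gap_gt0 => //; exact: lt_trans cuv.
  - exact: integrable_H.
have : 0 < \int[mu]_(z in D) G z.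
  apply: (Rintegral_gt0 (A := D `&` [set z | u z < c])) => //.
  - by apply: measurable_funB; apply: measurable_funD; apply: measurable_funM.
  - by move=> z _; rewrite GE; apply: Rintegral_ge0 => v _; rewrite HE cross_gap_ge0.
  - by move=> z [_ /= uzc]; exact: G_gt0.
  - by apply: integrable_comb4 => //; exact: integrable_phi.
have mgfE t : \int[mu]_(z in D) phi t z = mgf t by [].
rewrite Rintegral_comb4 ?mgfE //; try exact: integrable_phi.
by lra.
Qed.

End mgf.

Lemma expR_div_powR_ratio_lt (R : realType) (c nu x y b : R) (F : R -> R) :
  0 < nu -> (forall t, 0 < F t) -> F (x + b) * F y < F x * F (y + b) ->
  expR (c * (y + b)) / F (y + b) `^ nu / (expR (c * y) / F y `^ nu) <
  expR (c * (x + b)) / F (x + b) `^ nu / (expR (c * x) / F x `^ nu).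
Proof.
move=> nu_gt0 F_gt0 Fxy.
have Fnu_gt0 t : 0 < F t `^ nu by rewrite powR_gt0.
have ratioE t : expR (c * (t + b)) / F (t + b) `^ nu / (expR (c * t) / F t `^ nu) =
    expR (c * b) * (F t `^ nu / F (t + b) `^ nu).
  by rewrite mulrDr expRD; field; rewrite !gt_eqF ?expR_gt0.
rewrite !ratioE ltr_pM2l ?expR_gt0// ltr_pdivlMr// mulrAC ltr_pdivrMr//.
rewrite -!powRM ?ltW// [F y * _]mulrC.
by apply: gt0_ltr_powR; rewrite ?nnegrE ?mulr_ge0 ?ltW.
Qed.

Section stiefel.
Variables (R : realType) (n p : nat).

Lemma rmat_coord_measurable (i : 'I_n) (j : 'I_p) (D : set (rmat R n p)) :
  measurable_fun D (fun X : rmat R n p => X i j).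
Proof.
move=> mD B mB; apply: measurableI => //; apply: sub_sigma_algebra.
by exists (i, j) => //; exists B => //; rewrite setTI.
Qed.

Lemma measurable_rmat_entry (i : 'I_n) (j : 'I_p) (B : set R) :
  measurable B -> measurable [set X : rmat R n p | B (X i j)].
Proof. by move=> mB; rewrite -[X in measurable X]setTI; exact: rmat_coord_measurable. Qed.

Definition diag_dot (e : 'I_p -> R) (X : rmat R n p) : R :=
  \sum_(i < n) \sum_(j < p | (i == j :> nat)) e j * X i j.

Lemma measurable_diag_dot (e : 'I_p -> R) (D : set (rmat R n p)) :
  measurable_fun D (diag_dot e).
Proof.
rewrite /diag_dot; apply: measurable_sum => i.
under eq_fun do rewrite big_mkcond /=.
apply: measurable_sum => j; case: eqP => _; last exact: measurable_cst.
by apply: measurable_funM => //; exact: rmat_coord_measurable.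
Qed.

Lemma stiefel_col_norm (X : rmat R n p) (j : 'I_p) :
  stiefel X -> \sum_(i < n) X i j ^+ 2 = 1.
Proof.
move=> /(congr1 (fun M : 'M[R]_p => M j j)); rewrite !mxE eqxx mulr1n => <-.
by apply: eq_bigr => i _; rewrite mxE.
Qed.

Lemma stiefel_entry_le1 (X : rmat R n p) i j : stiefel X -> `|X i j| <= 1.
Proof.
move=> /(stiefel_col_norm j) norm1.
rewrite -(expr_le1 (n := 2)) // real_normK ?num_real // -norm1.
by rewrite (bigD1 i) //= lerDl sumr_ge0 // => k _; rewrite sqr_ge0.
Qed.

Lemma stiefel_col_neq0 (X : rmat R n p) (j : 'I_p) :
  stiefel X -> exists i, X i j != 0.
Proof.
move=> /(stiefel_col_norm j) norm1; apply: contrapT => /forallNP X0.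
move: norm1; rewrite big1 => [/eqP|i _]; first by rewrite eq_sym oner_eq0.
by have /negP := X0 i; rewrite negbK => /eqP ->; rewrite expr0n.
Qed.

Lemma stiefel_diag_dot_le (e : 'I_p -> R) (X : rmat R n p) : stiefel X ->
  `|diag_dot e X| <= \sum_(i < n) \sum_(j < p | (i == j :> nat)) `|e j|.
Proof.
move=> sX; apply: le_trans (ler_norm_sum _ _ _) _.
apply: ler_sum => i _; apply: le_trans (ler_norm_sum _ _ _) _.
apply: ler_sum => j _; rewrite normrM.
by rewrite -[leRHS]mulr1 ler_wpM2l // stiefel_entry_le1.
Qed.

End stiefel.

Lemma diag_dot_dvec (R : realType) n q (x : R) (dr : 'I_q.+1 -> R)
    (X : rmat R n.+1 q.+1) :
  diag_dot (dvec x dr) X = x * X ord0 ord0 + diag_dot (dvec 0 dr) X.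
Proof.
have splitE j : dvec x dr j = (if j == ord0 then x else 0) + dvec 0 dr j.
  by rewrite /dvec; case: ifP; rewrite ?add0r ?addr0.
rewrite /diag_dot; under eq_bigr do under eq_bigr do rewrite splitE mulrDl.
under eq_bigr do rewrite big_split /=.
rewrite big_split /=; congr (_ + _).
rewrite big_ord_recl [X in _ + X]big1 ?addr0 => [|i _].
  by rewrite (big_pred1 ord0) ?eqxx // => j /=; rewrite eq_sym.
apply: big1 => j /eqP ij; case: eqP => [j0|_]; last by rewrite mul0r.
by move: ij; rewrite j0.
Qed.

Section haar.
Variables (R : realType) (n q : nat) (mu : probability (rmat R n.+1 q.+1) R).
Hypothesis haar : stiefel_haar mu.

Lemma haar_preimage (Q : 'M[R]_n.+1) (A B : set (rmat R n.+1 q.+1)) :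
  Q^T *m Q = 1%:M -> measurable A -> (forall X, A (Q *m X) <-> B X) -> mu B = mu A.
Proof.
move=> Qo mA AB; have [_ inv] := haar; rewrite -(inv Q Qo A mA).
by congr (mu _); apply/seteqP; split => X /AB.
Qed.

Lemma haar_entry_sign : mu [set X | X ord0 ord0 < 0] = mu [set X | 0 < X ord0 ord0].
Proof.
apply: (haar_preimage (Q := (-1)%:M)).
- by rewrite tr_scalar_mx -scalar_mxM mulrNN mulr1.
- by rewrite -preimage_itvoy; exact: measurable_rmat_entry.
- by move=> X /=; rewrite mul_scalar_mx mxE mulN1r oppr_gt0.
Qed.

Lemma haar_row_swap (i : 'I_n.+1) (j : 'I_q.+1) (B : set R) : measurable B ->
  mu [set X | B (X i j)] = mu [set X | B (X ord0 j)].
Proof.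
move=> mB; apply: (haar_preimage (Q := perm_mx (tperm ord0 i))).
- by rewrite tr_perm_mx -perm_mxM mulVg perm_mx1.
- exact: measurable_rmat_entry.
- by move=> X /=; rewrite -row_permE mxE tpermL.
Qed.

Lemma haar_entry_gt0 :
  (0 < mu [set X | (X ord0 ord0 < 0)%R])%E /\ (0 < mu [set X | (0 < X ord0 ord0)%R])%E.
Proof.
rewrite haar_entry_sign; suff mu_pos : (0 < mu [set X | (0 < X ord0 ord0)%R])%E by [].
have [[N [mN N0 sN]] _] := haar.
rewrite lt0e measure_ge0 andbT; apply/negP => /eqP pos0.
pose Z (i : 'I_n.+1) := [set X : rmat R n.+1 q.+1 | (~` [set 0]) (X i ord0)].
have mZ i : measurable (Z i) by apply: measurable_rmat_entry; exact: measurableC.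
have negZ0 : mu.-negligible (Z ord0).
  apply: (@negligibleS _ _ _ _
    ([set X : rmat R n.+1 q.+1 | X ord0 ord0 < 0] `|` [set X | 0 < X ord0 ord0])).
    by move=> X /eqP; rewrite neq_lt => /orP[]; [left | right].
  apply: negligibleU; apply/negligibleP.
  - by rewrite -preimage_itvNyo; exact: measurable_rmat_entry.
  - exact: etrans haar_entry_sign pos0.
  - by rewrite -preimage_itvoy; exact: measurable_rmat_entry.
  - exact: pos0.
have negZ i : mu.-negligible (Z i).
  apply/negligibleP => //; rewrite -(measure_negligible (mZ ord0) negZ0).
  exact: (haar_row_swap i ord0 (measurableC (measurable_set1 (0 : R)))).
have : mu.-negligible setT.
  apply: (@negligibleS _ _ _ _ (N `|` \bigcup_k Z (inord k))).
    move=> X _; have [|XS] := pselect (stiefel X); last by left; exact: sN.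
    move=> /(stiefel_col_neq0 ord0) [i /eqP Xi0]; right.
    by exists (val i) => //; rewrite inord_val.
  apply: negligibleU; first by exists N; split.
  by apply: negligible_bigcup => k; exact: negZ.
move=> /(measure_negligible measurableT) mu_setT0.
have := probability_setT mu; rewrite mu_setT0 => /eqP.
by rewrite eq_sym onee_eq0.
Qed.

End haar.

Lemma hyp0F1_mgf (R : realType) n q (mu : probability (rmat R n.+1 q.+1) R)
    (N : set (rmat R n.+1 q.+1)) (dr : 'I_q.+1 -> R) (t : R) :
  measurable N -> mu N = 0%E ->
  hyp0F1 mu (dvec t dr) =
  mgf mu (~` N) (fun X => X ord0 ord0) (diag_dot (dvec 0 dr)) t.
Proof.
move=> mN N0; rewrite /hyp0F1 (Rintegral_setC_null mN N0); last 2 first.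
- by apply: measurableT_comp => //; exact: measurable_diag_dot.
- by move=> X; exact: expR_ge0.
by apply: eq_Rintegral => X _; rewrite -[in RHS]diag_dot_dvec.
Qed.

Theorem lemma10 (R : realType) (n q : nat)
    (mu : probability (rmat R n q.+1) R) (nu : R)
    (eta : 'I_q.+1 -> R) (dr : 'I_q.+1 -> R) (m : R) :
  (q.+1 <= n)%N ->
  stiefel_haar mu ->
  0 < nu ->
  (forall j, eta j < 1) ->
  (forall j : 'I_q.+1, j != ord0 -> 0 < dr j) ->
  is_mode (g1 mu nu eta dr) m ->
  forall b : R, 0 < b ->
  forall x y : R, m < x -> x < y ->
    g1 mu nu eta dr (y + b) / g1 mu nu eta dr y <
    g1 mu nu eta dr (x + b) / g1 mu nu eta dr x.
Proof.
case: n mu => [//|n] mu _ haar nu_gt0 _ _ _ b b_gt0 x y _ xy.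
have [[N [mN N0 sN]] _] := haar.
have stiefelD X : (~` N) X -> stiefel X by move=> NX; apply: contrapT => /sN.
have mD : measurable (~` N) by exact: measurableC.
have mu_ := @rmat_coord_measurable R n.+1 q.+1 ord0 ord0 (~` N).
have mw := @measurable_diag_dot R n.+1 q.+1 (dvec 0 dr) (~` N).
have bu X : (~` N) X -> `|X ord0 ord0| <= 1 by move/stiefelD/stiefel_entry_le1.
have bw X (NX : (~` N) X) := stiefel_diag_dot_le (dvec 0 dr) (stiefelD X NX).
have [neg pos] := haar_entry_gt0 haar.
have u_lt : (0 < mu (~` N `&` [set X | (X ord0 ord0 < 0)%R]))%E.
  by rewrite measure_setCI_null // -preimage_itvNyo; exact: measurable_rmat_entry.
have u_gt : (0 < mu (~` N `&` [set X | (0 < X ord0 ord0)%R]))%E.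
  by rewrite measure_setCI_null // -preimage_itvoy; exact: measurable_rmat_entry.
rewrite /g1 !(hyp0F1_mgf _ _ mN N0).
apply: expR_div_powR_ratio_lt => // [t|].
  exact: mgf_gt0 mD mu_ mw bu bw u_lt t.
exact: mgf_strict_logconvex mD mu_ mw bu bw u_lt u_gt x y b xy b_gt0.
Qed.
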